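(* Let $\mathcal{V}=\{V_1,\ldots,V_n\}$ be a finite set of variables and $\mathbb{I}\in\{\mathbb{Z},\mathbb{Q},\mathbb{R}\}$. Let $(\mathcal{D}^\sharp,\gamma)$ be a numerical abstract domain with concretization $\gamma:\mathcal{D}^\sharp\to\mathcal{P}(\mathcal{V}\to\mathbb{I})$ equipped with sound abstract transfer functions, i.e. for every instruction $\mathit{inst}$ (assignment or test) and every $X^\sharp\in\mathcal{D}^\sharp$, $\{\!|\mathit{inst}|\!\}(\gamma(X^\sharp))\subseteq\gamma(\{\!|\mathit{inst}|\!\}^\sharp(X^\sharp))$. Let $R^\sharp\in\mathcal{D}^\sharp$, let $V\in\mathcal{V}$, let $\bowtie\,\in\{=,\neq,<,\leq,\geq,>\}$, and let $e,e'$ be expressions such that $\gamma(R^\sharp)\models e\preceq e'$. Then (i) $\{\!|V\leftarrow e|\!\}(\gamma(R^\sharp))\subseteq\gamma(\{\!|V\leftarrow e'|\!\}^\sharp(R^\sharp))$, and (ii) $\{\!|e\bowtie 0\,?|\!\}(\gamma(R^\sharp))\subseteq\gamma(\{\!|e'\bowtie 0\,?|\!\}^\sharp(R^\sharp))$.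
   Context: Expressions are generated by: a variable $X\in\mathcal{V}$; an interval constant $[a,b]$ with $a\in\mathbb{I}\cup\{-\infty\}$, $b\in\mathbb{I}\cup\{+\infty\}$, $a\leq b$; or $e_1\diamond e_2$ with $\diamond\in\{+,-,\times,/\}$. An environment is a map $\rho:\mathcal{V}\to\mathbb{I}$. The semantics $[\![e]\!](\rho)\subseteq\mathbb{I}$ is: $[\![X]\!](\rho)=\{\rho(X)\}$; $[\![[a,b]]\!](\rho)=\{x\in\mathbb{I}\mid a\leq x\leq b\}$; $[\![e_1\diamond e_2]\!](\rho)=\{x\diamond y\mid x\in[\![e_1]\!](\rho),y\in[\![e_2]\!](\rho)\}$ for $\diamond\in\{+,-,\times\}$; $[\![e_1/e_2]\!](\rho)=\{x/y\mid x\in[\![e_1]\!](\rho),y\in[\![e_2]\!](\rho),y\neq0\}$ if $\mathbb{I}\neq\mathbb{Z}$, and $\{\mathit{truncate}(x/y)\mid \ldots, y\neq 0\}$ (rounding towards zero) if $\mathbb{I}=\mathbb{Z}$. Concrete transfer functions on sets $R$ of environments: $\{\!|X\leftarrow e|\!\}(R)=\{\rho[X\mapsto v]\mid\rho\in R,\ v\in[\![e]\!](\rho)\}$ (where $\rho[X\mapsto v]$ agrees with $\rho$ except it maps $X$ to $v$), and $\{\!|e\bowtie0\,?|\!\}(R)=\{\rho\in R\mid\exists v\in[\![e]\!](\rho),\ v\bowtie 0\}$. For a set $R$ of environments, $R\models e_1\preceq e_2$ means $\forall\rho\in R,\ [\![e_1]\!](\rho)\subseteq[\![e_2]\!](\rho)$.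 *)

(* I in {Z, Q, R} rendered as Z, Qc (canonical rationals, so
   that equality is Leibniz), and R. *)
From Stdlib Require Import ZArith QArith Qcanon Reals.

Inductive kind := KZ | KQ | KR.

Definition carrier (k : kind) : Type :=
  match k with KZ => Z | KQ => Qc | KR => R end.

Definition c_zero (k : kind) : carrier k :=
  match k return carrier k with KZ => 0%Z | KQ => Q2Qc 0 | KR => 0%R end.

Definition c_add (k : kind) : carrier k -> carrier k -> carrier k :=
  match k return carrier k -> carrier k -> carrier k with
  | KZ => Z.add | KQ => Qcplus | KR => Rplus end.
Definition c_sub (k : kind) : carrier k -> carrier k -> carrier k :=
  match k return carrier k -> carrier k -> carrier k with
  | KZ => Z.sub | KQ => Qcminus | KR => Rminus end.
Definition c_mul (k : kind) : carrier k -> carrier k -> carrier k :=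
  match k return carrier k -> carrier k -> carrier k with
  | KZ => Z.mul | KQ => Qcmult | KR => Rmult end.
Definition c_div (k : kind) : carrier k -> carrier k -> carrier k :=
  match k return carrier k -> carrier k -> carrier k with
  | KZ => Z.quot | KQ => Qcdiv | KR => Rdiv end.
Definition c_le (k : kind) : carrier k -> carrier k -> Prop :=
  match k return carrier k -> carrier k -> Prop with
  | KZ => Z.le | KQ => Qcle | KR => Rle end.
Definition c_lt (k : kind) : carrier k -> carrier k -> Prop :=
  match k return carrier k -> carrier k -> Prop with
  | KZ => Z.lt | KQ => Qclt | KR => Rlt end.

Definition var (n : nat) : Type := { i : nat | (i < n)%nat }.

Definition env (k : kind) (n : nat) : Type := var n -> carrier k.

(* bounds: None for -oo (lower) / +oo (upper) *)
Definition bounds_ok (k : kind) (a b : option (carrier k)) : Prop :=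
  match a, b with Some a, Some b => c_le k a b | _, _ => True end.

Inductive binop := Add | Sub | Mul | Div.

Inductive expr (k : kind) (n : nat) : Type :=
| Evar : var n -> expr k n
| Ecst : forall (a b : option (carrier k)), bounds_ok k a b -> expr k n
| Ebin : binop -> expr k n -> expr k n -> expr k n.
Arguments Evar {k n}.
Arguments Ecst {k n}.
Arguments Ebin {k n}.

Definition in_bounds (k : kind) (a b : option (carrier k)) (x : carrier k) : Prop :=
  match a with Some a => c_le k a x | None => True end /\
  match b with Some b => c_le k x b | None => True end.

Definition apply_op (k : kind) (o : binop) : carrier k -> carrier k -> carrier k :=
  match o with Add => c_add k | Sub => c_sub k | Mul => c_mul k | Div => c_div k end.

Fixpoint sem {k n} (e : expr k n) (rho : env k n) (v : carrier k) : Prop :=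
  match e with
  | Evar X => v = rho X
  | Ecst a b _ => in_bounds k a b v
  | Ebin o e1 e2 =>
      exists x y, sem e1 rho x /\ sem e2 rho y /\
        (o = Div -> y <> c_zero k) /\ v = apply_op k o x y
  end.

Definition envset (k : kind) (n : nat) : Type := env k n -> Prop.

Definition subset {k n} (A B : envset k n) : Prop := forall rho, A rho -> B rho.

Definition upd {k n} (rho : env k n) (X : var n) (v : carrier k) : env k n :=
  fun Y => if Nat.eqb (proj1_sig Y) (proj1_sig X) then v else rho Y.

Inductive cmp := Ceq | Cne | Clt | Cle | Cge | Cgt.

Definition cmp_sem (k : kind) (c : cmp) (x y : carrier k) : Prop :=
  match c with
  | Ceq => x = y | Cne => x <> y | Clt => c_lt k x y
  | Cle => c_le k x y | Cge => c_le k y x | Cgt => c_lt k y x end.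

Definition assign_c {k n} (X : var n) (e : expr k n) (R : envset k n) : envset k n :=
  fun rho' => exists rho v, R rho /\ sem e rho v /\ rho' = upd rho X v.

Definition test_c {k n} (e : expr k n) (c : cmp) (R : envset k n) : envset k n :=
  fun rho => R rho /\ exists v, sem e rho v /\ cmp_sem k c v (c_zero k).

Inductive inst (k : kind) (n : nat) : Type :=
| Iassign : var n -> expr k n -> inst k n
| Itest : expr k n -> cmp -> inst k n.
Arguments Iassign {k n}.
Arguments Itest {k n}.

Definition inst_c {k n} (i : inst k n) : envset k n -> envset k n :=
  match i with Iassign X e => assign_c X e | Itest e c => test_c e c end.

Definition models_pre {k n} (R : envset k n) (e1 e2 : expr k n) : Prop :=
  forall rho, R rho -> forall v, sem e1 rho v -> sem e2 rho v.


Lemma subset_trans {k n} (A B C : envset k n) :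
  subset A B -> subset B C -> subset A C.
Proof. intros HAB HBC rho HA. exact (HBC rho (HAB rho HA)). Qed.

Lemma assign_c_models_pre {k n} (R : envset k n) (X : var n) (e e' : expr k n) :
  models_pre R e e' -> subset (assign_c X e R) (assign_c X e' R).
Proof.
  intros Hee' rho' [rho [v [HR [Hv ->]]]].
  exists rho, v. split; [exact HR |].
  split; [exact (Hee' rho HR v Hv) | reflexivity].
Qed.

Lemma test_c_models_pre {k n} (R : envset k n) (e e' : expr k n) (c : cmp) :
  models_pre R e e' -> subset (test_c e c R) (test_c e' c R).
Proof.
  intros Hee' rho [HR [v [Hv Hc]]].
  split; [exact HR |]. exists v. split; [exact (Hee' rho HR v Hv) | exact Hc].
Qed.

Theorem theorem1 (k : kind) (n : nat) (D : Type) (gamma : D -> envset k n)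
  (tf : inst k n -> D -> D)
  (Hsound : forall (i : inst k n) (X : D), subset (inst_c i (gamma X)) (gamma (tf i X)))
  (Rs : D) (V : var n) (c : cmp) (e e' : expr k n)
  (He : models_pre (gamma Rs) e e') :
  subset (assign_c V e (gamma Rs)) (gamma (tf (Iassign V e') Rs)) /\
  subset (test_c e c (gamma Rs)) (gamma (tf (Itest e' c) Rs)).
Proof.
  split.
  - apply subset_trans with (assign_c V e' (gamma Rs)).
    + exact (assign_c_models_pre _ V _ _ He).
    + exact (Hsound (Iassign V e') Rs).
  - apply subset_trans with (test_c e' c (gamma Rs)).
    + exact (test_c_models_pre _ _ _ c He).
    + exact (Hsound (Itest e' c) Rs).
Qed.
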